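(* Fix a point and real numbers $L_F\neq0$, $L_{FF}$, $L_{FG}$, $L_{GG}$ (values at that point of derivatives of a Lagrangian $L(F,G)$), and an antisymmetric tensor $F_{\mu\nu}$ with invariants $F=F^{\mu\nu}F_{\mu\nu}$, $G=F^{\mu\nu}\tilde F_{\mu\nu}$. Let $f_{\mu\nu}$ be antisymmetric and $k_\lambda$ a covector satisfying (C) $f_{\mu\nu}k_\lambda+f_{\nu\lambda}k_\mu+f_{\lambda\mu}k_\nu=0$, and (E) $L_F f^{\mu\nu}k_\nu+A\,F^{\mu\nu}k_\nu+B\,\tilde F^{\mu\nu}k_\nu=0$, where $\xi=F^{\alpha\beta}f_{\alpha\beta}$, $\zeta=\tilde F^{\alpha\beta}f_{\alpha\beta}$, $A=2(\xi L_{FF}+\zeta L_{FG})$, $B=2(\xi L_{FG}+\zeta L_{GG})$. Suppose $\xi\neq0$ and set $\Omega=\zeta/\xi$. Then: (a) $g_\Omega^{\mu\nu}k_\mu k_\nu=0$, where $$g_\Omega^{\mu\nu}=L_F\eta^{\mu\nu}-4\Big[(L_{FF}+\Omega L_{FG})F^{\mu}{}_{\lambda}F^{\lambda\nu}+(L_{FG}+\Omega L_{GG})F^{\mu}{}_{\lambda}\tilde F^{\lambda\nu}\Big];$$ (b) if moreover $\eta^{\mu\nu}k_\mu k_\nu\neq0$, then $\Omega^2\Omega_1+\Omega\,\Omega_2+\Omega_3=0$, where $\Omega_1=-L_FL_{FG}+2FL_{FG}L_{GG}+G(L_{GG}^2-L_{FG}^2)$, $\Omega_2=(L_F+2GL_{FG})(L_{GG}-L_{FF})+2F(L_{FF}L_{GG}+L_{FG}^2)$,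 $\Omega_3=L_FL_{FG}+2FL_{FF}L_{FG}+G(L_{FG}^2-L_{FF}^2)$.
   Context: Minkowski metric $\eta_{\mu\nu}=\mathrm{diag}(1,-1,-1,-1)$, indices raised/lowered with $\eta$, summation convention. The dual is $\tilde F_{\alpha\beta}=\tfrac12\eta_{\alpha\beta}{}^{\mu\nu}F_{\mu\nu}$ with $\eta_{\alpha\beta\mu\nu}$ the totally antisymmetric Levi-Civita tensor; with these conventions $\tilde F_{\mu\nu}F^{\nu\lambda}=-\tfrac14G\,\delta_\mu^\lambda$ and $\tilde F_{\mu\lambda}\tilde F^{\lambda\nu}-F_{\mu\lambda}F^{\lambda\nu}=\tfrac12F\,\delta_\mu^\nu$. Conditions (C),(E) are the jump conditions for the field equations $\partial_\nu(L_FF^{\mu\nu}+L_G\tilde F^{\mu\nu})=0$ across a wavefront where $\partial_\lambda F_{\mu\nu}$ jumps by $f_{\mu\nu}k_\lambda$. *)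

From mathcomp Require Import all_boot all_order all_algebra.
Set Implicit Arguments. Unset Strict Implicit. Unset Printing Implicit Defensive.
Import Order.TTheory GRing.Theory Num.Theory.
Local Open Scope ring_scope.

Section Minkowski.
Variable R : realFieldType.

(* Covariant (lower-index) 2-tensors and covectors; indices 0..3, 0 = time. *)
Definition tensor2 := 'I_4 -> 'I_4 -> R.
Definition covec := 'I_4 -> R.

(* diagonal entries of eta = diag(1,-1,-1,-1) (same for eta_{mu nu} and eta^{mu nu}) *)
Definition eta (i : 'I_4) : R := if (i == 0 :> nat) then 1 else -1.

Definition etaUp (i j : 'I_4) : R := if i == j then eta i else 0.

(* Levi-Civita symbol eta_{abcd} (lower indices), eta_{0123} = +1:
   the sign of prod_{i<j} (x_j - x_i), zero if two indices coincide. *)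
Definition levi (a b c d : 'I_4) : R :=
  let df (x y : 'I_4) : int := (y%:Z - x%:Z) in
  (Num.sg (df a b * df a c * df a d * df b c * df b d * df c d))%:~R.

Definition antisym (T : tensor2) : Prop := forall i j, T i j = - T j i.

Definition up (T : tensor2) : tensor2 := fun i j => eta i * eta j * T i j.

(* dual: ~T_{ab} = 1/2 eta_{ab}^{mu nu} T_{mu nu} = 1/2 sum eta_{ab mu nu} T^{mu nu} *)
Definition dual (T : tensor2) : tensor2 :=
  fun a b => 2^-1 * \sum_(m < 4) \sum_(n < 4) levi a b m n * up T m n.

Definition contr (S T : tensor2) : R :=
  \sum_(a < 4) \sum_(b < 4) up S a b * T a b.

Definition invFF (T : tensor2) : R := contr T T.
Definition invGG (T : tensor2) : R := contr T (dual T).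

Definition mixprod (T S : tensor2) (m n : 'I_4) : R :=
  \sum_(l < 4) (eta m * T m l) * up S l n.

Definition quad (Q : 'I_4 -> 'I_4 -> R) (k : covec) : R :=
  \sum_(m < 4) \sum_(n < 4) Q m n * k m * k n.

Definition condC (f : tensor2) (k : covec) : Prop :=
  forall m n l, f m n * k l + f n l * k m + f l m * k n = 0.

Definition xi (Fl f : tensor2) : R := contr Fl f.
Definition zeta (Fl f : tensor2) : R := contr (dual Fl) f.
Definition coefA (LFF LFG : R) (Fl f : tensor2) : R :=
  2 * (xi Fl f * LFF + zeta Fl f * LFG).
Definition coefB (LFG LGG : R) (Fl f : tensor2) : R :=
  2 * (xi Fl f * LFG + zeta Fl f * LGG).

Definition condE (LF LFF LFG LGG : R) (Fl f : tensor2) (k : covec) : Prop :=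
  forall m, \sum_(n < 4)
    (LF * up f m n + coefA LFF LFG Fl f * up Fl m n
     + coefB LFG LGG Fl f * up (dual Fl) m n) * k n = 0.

Definition gOmega (LF LFF LFG LGG Om : R) (Fl : tensor2) (m n : 'I_4) : R :=
  LF * etaUp m n
  - 4 * ((LFF + Om * LFG) * mixprod Fl Fl m n
         + (LFG + Om * LGG) * mixprod Fl (dual Fl) m n).

Definition Omega1 (LF LFF LFG LGG FF GG : R) : R :=
  - LF * LFG + 2 * FF * LFG * LGG + GG * (LGG ^+ 2 - LFG ^+ 2).
Definition Omega2 (LF LFF LFG LGG FF GG : R) : R :=
  (LF + 2 * GG * LFG) * (LGG - LFF) + 2 * FF * (LFF * LGG + LFG ^+ 2).
Definition Omega3 (LF LFF LFG LGG FF GG : R) : R :=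
  LF * LFG + 2 * FF * LFF * LFG + GG * (LFG ^+ 2 - LFF ^+ 2).

End Minkowski.

(* Contract (C) with F^{mn} k^l and with ~F^{mn} k^l: by antisymmetry this gives
   xi k.k = 2 (Fk).(fk) and zeta k.k = 2 (~Fk).(fk), where (Tk)_m = T_m^l k_l.
   Contract (E) with Fk and with ~Fk.  Together with the duality identities
   (Fk).(~Fk) = G k.k / 4 and (~Fk).(~Fk) - (Fk).(Fk) = - F k.k / 2, the quadratic
   form g_Omega(k, k) becomes xi^-1 times a linear combination of the contracted
   (C) and (E), which gives (a).  For (b), eliminating (Fk).(Fk) between the two
   contracted (E) leaves k.k xi^2 times the quadratic polynomial in Omega. *)
From Pilot Require Import Defs.
From mathcomp Require Import all_boot all_order all_algebra.
From mathcomp Require Import ring.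
Set Implicit Arguments. Unset Strict Implicit. Unset Printing Implicit Defensive.
Import Order.TTheory GRing.Theory Num.Theory.
Local Open Scope ring_scope.

Definition i0 : 'I_4 := @Ordinal 4 0 isT.
Definition i1 : 'I_4 := @Ordinal 4 1 isT.
Definition i2 : 'I_4 := @Ordinal 4 2 isT.
Definition i3 : 'I_4 := @Ordinal 4 3 isT.

Lemma ord4P (i : 'I_4) : [\/ i = i0, i = i1, i = i2 | i = i3].
Proof.
by case: i => [[|[|[|[|?]]]] Hi] //; [apply: Or41|apply: Or42|apply: Or43|apply: Or44];
  apply: val_inj.
Qed.

Lemma big_ord4 (R : nmodType) (F : 'I_4 -> R) :
  \sum_(i < 4) F i = F i0 + F i1 + F i2 + F i3.
Proof.
rewrite !big_ord_recl big_ord0 addr0 !addrA.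
by congr (_ + _ + _ + _); congr F; apply: val_inj.
Qed.

(* The sign of the permutation (a b c d) of (0 1 2 3) computed from its number of
   inversions; unlike [levi], it reduces to a numeral on concrete indices. *)
Definition inversions4 (a b c d : nat) : nat :=
  (b < a)%N + (c < a)%N + (d < a)%N + (c < b)%N + (d < b)%N + (d < c)%N.

Definition perm_sign4 {R : pzRingType} (a b c d : nat) : R :=
  if uniq [:: a; b; c; d] then (if odd (inversions4 a b c d) then -1 else 1) else 0.

Lemma levi_sg_int (a b c d : 'I_4) :
  let df (x y : 'I_4) : int := y%:Z - x%:Z in
  Num.sg (df a b * df a c * df a d * df b c * df b d * df c d) = perm_sign4 a b c d.
Proof.
by case: a => [[|[|[|[|a]]]] Ha] //; case: b => [[|[|[|[|b]]]] Hb] //;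
  case: c => [[|[|[|[|c]]]] Hc] //; case: d => [[|[|[|[|d]]]] Hd] //; vm_compute.
Qed.

Lemma leviE (R : realFieldType) (a b c d : 'I_4) : levi R a b c d = perm_sign4 a b c d.
Proof.
rewrite /levi levi_sg_int /perm_sign4.
by case: ifP => _; [case: ifP => _; rewrite ?mulrN1z ?mulr1z | rewrite mulr0z].
Qed.

Section Tensors.
Context {R : realFieldType}.
Implicit Types (T f : tensor2 R) (k u v : covec R).

Lemma antisymE {T} : antisym T ->
  (T i0 i0 = 0) * (T i1 i1 = 0) * (T i2 i2 = 0) * (T i3 i3 = 0) *
  (T i1 i0 = - T i0 i1) * (T i2 i0 = - T i0 i2) * (T i3 i0 = - T i0 i3) *
  (T i2 i1 = - T i1 i2) * (T i3 i1 = - T i1 i3) * (T i3 i2 = - T i2 i3).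
Proof.
move=> hT; have diag0 i : T i i = 0.
  by apply/eqP; move/eqP: (hT i i); rewrite -subr_eq0 opprK -mulr2n mulrn_eq0.
by rewrite !diag0 !(hT i1 i0) !(hT i2 i0) !(hT i3 i0) !(hT i2 i1) !(hT i3 i1) !(hT i3 i2).
Qed.

Lemma dualE {T} : antisym T ->
  (dual T i0 i0 = 0) * (dual T i1 i1 = 0) * (dual T i2 i2 = 0) * (dual T i3 i3 = 0) *
  (dual T i0 i1 = T i2 i3) * (dual T i1 i0 = - T i2 i3) *
  (dual T i0 i2 = - T i1 i3) * (dual T i2 i0 = T i1 i3) *
  (dual T i0 i3 = T i1 i2) * (dual T i3 i0 = - T i1 i2) *
  (dual T i1 i2 = - T i0 i3) * (dual T i2 i1 = T i0 i3) *
  (dual T i1 i3 = T i0 i2) * (dual T i3 i1 = - T i0 i2) *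
  (dual T i2 i3 = - T i0 i1) * (dual T i3 i2 = T i0 i1).
Proof.
move=> hT; rewrite /dual /up !big_ord4 !leviE /perm_sign4 /eta /= !(antisymE hT).
by do 15? split; field.
Qed.

Lemma antisym_dual T : antisym T -> antisym (dual T).
Proof.
move=> hT i j.
by case: (ord4P i) => ->; case: (ord4P j) => ->; rewrite !(dualE hT) ?opprK ?oppr0.
Qed.

Definition tmulv T k (m : 'I_4) : R := \sum_(l < 4) T m l * (eta R l * k l).

Definition mdot u v : R := \sum_(m < 4) eta R m * u m * v m.

Lemma mdotC u v : mdot u v = mdot v u.
Proof. by apply: eq_bigr => m _; rewrite mulrAC. Qed.

Lemma condC_contr T f k : antisym T -> antisym f -> condC f k ->
  contr T f * quad (@etaUp R) k = 2 * mdot (tmulv T k) (tmulv f k).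
Proof.
move=> hT hf hC; apply/eqP; rewrite -subr_eq0.
have -> : 0 = \sum_(m < 4) \sum_(n < 4) \sum_(l < 4)
    up T m n * (eta R l * k l) * (f m n * k l + f n l * k m + f l m * k n).
  by symmetry; do 3 (apply: big1 => ? _); rewrite hC mulr0.
rewrite /contr /quad /mdot /tmulv /up /etaUp /eta !big_ord4 /= !(antisymE hT) !(antisymE hf).
by apply/eqP; ring.
Qed.

Lemma condE_contr LF LFF LFG LGG Fl f k u :
  antisym Fl -> antisym f -> condE LF LFF LFG LGG Fl f k ->
  LF * mdot u (tmulv f k) + Defs.coefA LFF LFG Fl f * mdot u (tmulv Fl k)
  + Defs.coefB LFG LGG Fl f * mdot u (tmulv (dual Fl) k) = 0.
Proof.
move=> hF hf hE; set A := Defs.coefA _ _ _ _; set B := Defs.coefB _ _ _ _.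
have <- : \sum_(m < 4) u m * \sum_(n < 4)
    (LF * up f m n + A * up Fl m n + B * up (dual Fl) m n) * k n = 0.
  by apply: big1 => m _; rewrite hE mulr0.
rewrite /mdot /tmulv /up /eta !big_ord4 /= !(dualE hF) !(antisymE hF) !(antisymE hf).
by ring.
Qed.

Lemma quad_gOmega LF LFF LFG LGG Om T k : antisym T ->
  quad (gOmega LF LFF LFG LGG Om T) k =
  LF * quad (@etaUp R) k + 4 * ((LFF + Om * LFG) * mdot (tmulv T k) (tmulv T k)
     + (LFG + Om * LGG) * mdot (tmulv T k) (tmulv (dual T) k)).
Proof.
move=> hT; rewrite /quad /gOmega /mixprod /mdot /tmulv /up /etaUp /eta.
by rewrite !big_ord4 /= !(dualE hT) !(antisymE hT); ring.
Qed.

Lemma mdot_tmulv_dual T k : antisym T ->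
  mdot (tmulv T k) (tmulv (dual T) k) = invGG T / 4 * quad (@etaUp R) k.
Proof.
move=> hT; rewrite /invGG /contr /quad /mdot /tmulv /up /etaUp /eta.
by rewrite !big_ord4 /= !(dualE hT) !(antisymE hT); field.
Qed.

Lemma mdot_tmulv_dual_dual T k : antisym T ->
  mdot (tmulv (dual T) k) (tmulv (dual T) k)
  = mdot (tmulv T k) (tmulv T k) - invFF T / 2 * quad (@etaUp R) k.
Proof.
move=> hT; rewrite /invFF /contr /quad /mdot /tmulv /up /etaUp /eta.
by rewrite !big_ord4 /= !(dualE hT) !(antisymE hT); field.
Qed.

End Tensors.

Section CharacteristicAlgebra.
Variables (R : realFieldType) (LF LFF LFG LGG x z Om : R).
Hypotheses (z_def : z = Om * x) (x_neq0 : x != 0).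

Let A := 2 * (x * LFF + z * LFG).
Let B := 2 * (x * LFG + z * LGG).

Lemma gOmega_null_of_jumps (K uu ut uf : R) :
  x * K = 2 * uf -> LF * uf + A * uu + B * ut = 0 ->
  LF * K + 4 * ((LFF + Om * LFG) * uu + (LFG + Om * LGG) * ut) = 0.
Proof.
move=> C1 E1; apply: (mulfI x_neq0); rewrite mulr0 -[RHS](mulr0 2) -E1.
have -> : uf = x * K / 2 by rewrite C1 mulrC mulKf ?pnatr_eq0.
by rewrite /A /B z_def; field.
Qed.

Lemma Omega_quadratic_of_jumps (K FF GG uu ut tt uf tf : R) : K != 0 ->
  x * K = 2 * uf -> z * K = 2 * tf ->
  LF * uf + A * uu + B * ut = 0 -> LF * tf + A * ut + B * tt = 0 ->
  ut = GG / 4 * K -> tt = uu - FF / 2 * K ->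
  Om ^+ 2 * Omega1 LF LFF LFG LGG FF GG + Om * Omega2 LF LFF LFG LGG FF GG
  + Omega3 LF LFF LFG LGG FF GG = 0.
Proof.
move=> K_neq0 C1 C2 E1 E2 ut_def tt_def.
have x2K_neq0 : K * x ^+ 2 != 0 by rewrite mulf_neq0 ?expf_neq0.
apply: (mulfI x2K_neq0); rewrite mulr0.
have <- : B * (LF * uf + A * uu + B * ut) - A * (LF * tf + A * ut + B * tt) = 0.
  by rewrite E1 E2 !mulr0 subrr.
have uf_def : uf = x * K / 2 by rewrite C1 mulrC mulKf ?pnatr_eq0.
have tf_def : tf = z * K / 2 by rewrite C2 mulrC mulKf ?pnatr_eq0.
rewrite uf_def tf_def ut_def tt_def /A /B z_def /Omega1 /Omega2 /Omega3.
by field.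
Qed.

End CharacteristicAlgebra.

Theorem mainTheorem3 (R : realFieldType) (LF LFF LFG LGG : R)
    (Fl f : tensor2 R) (k : covec R) :
  LF != 0 ->
  antisym Fl -> antisym f ->
  condC f k ->
  condE LF LFF LFG LGG Fl f k ->
  xi Fl f != 0 ->
  let Om := zeta Fl f / xi Fl f in
  quad (gOmega LF LFF LFG LGG Om Fl) k = 0 /\
  (quad (@etaUp R) k != 0 ->
   Om ^+ 2 * Omega1 LF LFF LFG LGG (invFF Fl) (invGG Fl)
   + Om * Omega2 LF LFF LFG LGG (invFF Fl) (invGG Fl)
   + Omega3 LF LFF LFG LGG (invFF Fl) (invGG Fl) = 0).
Proof.
move=> _ hF hf hC hE xi_neq0 Om.
have zeta_def : zeta Fl f = Om * xi Fl f by rewrite /Om divfK.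
clearbody Om.
have C1 := condC_contr hF hf hC.
have C2 := condC_contr (antisym_dual hF) hf hC.
have E1 := condE_contr (tmulv Fl k) hF hf hE.
have E2 := condE_contr (tmulv (dual Fl) k) hF hf hE.
rewrite [mdot _ (tmulv Fl k)]mdotC in E2.
rewrite /Defs.coefA /Defs.coefB in E1 E2.
split; first by rewrite quad_gOmega //; exact: (gOmega_null_of_jumps zeta_def xi_neq0 C1 E1).
move=> K_neq0.
exact: (Omega_quadratic_of_jumps zeta_def xi_neq0 K_neq0 C1 C2 E1 E2
          (mdot_tmulv_dual k hF) (mdot_tmulv_dual_dual k hF)).
Qed.
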